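(* Let $T$ be a well-formed trace satisfying the initial-write property, let $e$ be a read and $f$ a write of $T$ that are conflicting, and suppose there is a correctly reordered prefix of $T$ in which $e$ appears immediately before $f$. Then there is no correctly reordered prefix of $T$ in which $f$ appears immediately before $e$.
   Context: Traces. A trace $T$ is a finite sequence of pairwise distinct events. Each event $e$ belongs to a thread $\mathrm{tid}(e)$ and is one of: a read $r(x)$ or write $w(x)$ of a shared variable $x$, or an acquire $acq(y)$ or release $rel(y)$ of a lock $y$. The projection of $T$ onto thread $i$ is the subsequence of events of thread $i$. $T$ is well-formed if a thread only acquires a lock not currently held and every release $rel(y)$ in thread $i$ has a matching earlier acquire $acq(y)$ in thread $i$ with no other acquire on $y$ in between. Two events are conflicting if they are reads/writes on the same variable, at least one is a write, and they belong to different threads. For a read $e$ on $x$, a write $f$ on $x$ is the last write of $e$ w.r.t. $T$ if $f$ precedes $e$ in $T$ and no other write on $x$ lies strictly between them. $T$ satisfies the initial-write property if every read on $x$ is preceded in $T$ by some write on $x$. Correct reordering. $T'$ is a correctly reordered prefix of $T$ if $T'$ is a sequence of some of the events of $T$ such that: (i) for every thread $i$, the projection of $T'$ onto $i$ is a prefix of the projection of $T$ onto $i$; (ii) for every read $e$ in $T'$ whose last write w.r.t. $T$ is $f$, $f$ is in $T'$ and is also the last write of $e$ w.r.t. $T'$; (iii) for any two acquires $e_1,e_2$ on the same lock with $e_1$ before $e_2$ in $T'$, the matching release of $e_1$ is in $T'$ and lies strictly between $e_1$ and $e_2$. *)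

From HB Require Import structures.
From mathcomp Require Import all_boot.
Set Implicit Arguments. Unset Strict Implicit. Unset Printing Implicit Defensive.

Inductive op := Read of nat | Write of nat | Acq of nat | Rel of nat.

Definition op_code (o : op) : nat * nat :=
  match o with Read x => (0, x) | Write x => (1, x) | Acq y => (2, y) | Rel y => (3, y) end.
Definition op_decode (p : nat * nat) : option op :=
  match p with
  | (0, x) => Some (Read x) | (1, x) => Some (Write x)
  | (2, y) => Some (Acq y) | (3, y) => Some (Rel y) | _ => None end.
Lemma op_codeK : pcancel op_code op_decode. Proof. by case. Qed.
HB.instance Definition _ := Equality.copy op (pcan_type op_codeK).

(* The identifier makes it possible to have several events with the same
   thread and operation (events of a trace are pairwise distinct). *)
Record event := Event { eid : nat; tid : nat; eop : op }.
Definition ev_code (e : event) := (eid e, tid e, eop e).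
Definition ev_decode (p : nat * nat * op) := Event p.1.1 p.1.2 p.2.
Lemma ev_codeK : cancel ev_code ev_decode. Proof. by case. Qed.
HB.instance Definition _ := Equality.copy event (can_type ev_codeK).

Definition trace := seq event.

Definition is_read (e : event) (x : nat) := eop e == Read x.
Definition is_write (e : event) (x : nat) := eop e == Write x.
Definition is_acq (e : event) (y : nat) := eop e == Acq y.
Definition is_rel (e : event) (y : nat) := eop e == Rel y.

Definition is_trace (T : trace) := uniq T.

Definition before (s : trace) (e f : event) :=
  [/\ e \in s, f \in s & index e s < index f s].

Definition imm_before (s : trace) (e f : event) :=
  [/\ e \in s, f \in s & index f s = (index e s).+1].

Definition between (s : trace) (e g f : event) := before s e g /\ before s g f.

Definition proj (s : trace) (i : nat) := [seq e <- s | tid e == i].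

Definition held_before (T : trace) (k : event) (y : nat) :=
  exists a, [/\ is_acq a y, before T a k &
             forall r, is_rel r y -> ~ between T a r k].

Definition well_formed (T : trace) :=
  is_trace T /\
  (forall e y, e \in T -> is_acq e y -> ~ held_before T e y) /\
  (forall r y, r \in T -> is_rel r y ->
     exists a, [/\ is_acq a y, tid a = tid r, before T a r &
                forall a', is_acq a' y -> ~ between T a a' r]).

Definition conflicting (e f : event) :=
  exists x, [/\ is_read e x || is_write e x, is_read f x || is_write f x,
               is_write e x || is_write f x & tid e <> tid f].

Definition last_write (s : trace) (e f : event) :=
  exists x, [/\ is_read e x, is_write f x, before s f e &
             forall g, is_write g x -> ~ between s f g e].

Definition initial_write (T : trace) :=
  forall e x, e \in T -> is_read e x -> exists w, is_write w x /\ before T w e.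

Definition matching_release (T : trace) (a r : event) :=
  exists y, [/\ is_acq a y, is_rel r y, tid r = tid a, before T a r &
             forall r', is_rel r' y -> tid r' = tid a -> ~ between T a r' r].

Definition correctly_reordered_prefix (T' T : trace) :=
  [/\ uniq T', {subset T' <= T},
      (forall i, prefix (proj T' i) (proj T i)),
      (forall e f, e \in T' -> last_write T e f -> f \in T' /\ last_write T' e f) &
      (forall e1 e2 y, e1 \in T' -> e2 \in T' -> is_acq e1 y -> is_acq e2 y ->
         before T' e1 e2 ->
         exists r, [/\ matching_release T e1 r, r \in T' & between T' e1 r e2])].

(* By the initial-write property and finiteness, the read e has a
   last write g in T.  Condition (ii) of correct reordering forces g to be the
   last write of e in every correctly reordered prefix containing e; in
   particular g precedes e there.
   - In T1, e is immediately followed by f, so g (before e) differs from f.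
   - In T2, f immediately precedes e and g precedes e with g <> f, so g comes
     before f: the write f (on the variable of e) lies strictly between g and
     e, contradicting that g is the last write of e in T2. *)
From mathcomp Require Import all_boot.
From mathcomp Require Import zify.

Set Implicit Arguments. Unset Strict Implicit.

Section Positions.
Variable s : trace.

Lemma imm_before_before (e f : event) : imm_before s e f -> before s e f.
Proof. by case=> es fs idx_f; split; rewrite // idx_f. Qed.

Lemma before_imm_before_neq (g e f : event) :
  before s g e -> imm_before s e f -> g != f.
Proof.
case=> _ _ lt_ge [_ _ idx_f]; apply: contraTneq lt_ge => ->.
by rewrite idx_f ltnNge leqnSn.
Qed.

Lemma before_imm_pred (g f e : event) :
  before s g e -> imm_before s f e -> g != f -> before s g f.
Proof.
case=> gs _ lt_ge [fs _ idx_e] neq_gf; split=> //.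
have neq_idx : index g s != index f s.
  by apply: contra neq_gf => /eqP eq_idx; rewrite -(nth_index g gs) eq_idx nth_index.
by move: lt_ge; rewrite idx_e ltnS leq_eqVlt (negbTE neq_idx).
Qed.

End Positions.

Lemma is_read_inj (e : event) (x y : nat) : is_read e x -> is_read e y -> x = y.
Proof. by rewrite /is_read => /eqP -> /eqP []. Qed.

(* If some write of x precedes the read e of x, then e has a last write:
   walk forward from w to the latest write of x still preceding e.  The
   induction is on the distance between w and e. *)
Lemma last_write_exists (s : trace) (e w : event) (x : nat) :
  is_read e x -> is_write w x -> before s w e -> exists g, last_write s e g.
Proof.
move=> re; move: {2}(index e s - index w s) (leqnn (index e s - index w s)) => n.
elim: n w => [|n IH] w dist ww [ws es lt_we].
  lia.
pose later g := is_write g x && (index w s < index g s < index e s).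
have [/hasP [g gs /and3P [wg lt_wg lt_ge]] | no_later] := boolP (has later s).
  by apply: (IH g) => //; lia.
exists w, x; split=> // g wg [[_ gs lt_wg] [_ _ lt_ge]].
by move/hasP: no_later; apply; exists g; rewrite // /later wg lt_wg.
Qed.

Theorem mainTheorem11 (T : trace) (e f : event) (x : nat) :
  well_formed T -> initial_write T ->
  e \in T -> f \in T -> is_read e x -> is_write f x -> conflicting e f ->
  (exists T1, correctly_reordered_prefix T1 T /\ imm_before T1 e f) ->
  ~ (exists T2, correctly_reordered_prefix T2 T /\ imm_before T2 f e).
Proof.
move=> _ init eT _ re wf _ [T1 [[_ _ _ lw1 _] ef1]] [T2 [[_ _ _ lw2 _] fe2]].
have [w [ww bwe]] := init e x eT re.
have [g lw_g] := last_write_exists re ww bwe.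
(* g precedes e in T1, hence differs from f, the successor of e there *)
have [_ [x1 [_ _ bge1 _]]] := lw1 e g (let: And3 eT1 _ _ := ef1 in eT1) lw_g.
have neq_gf := before_imm_before_neq bge1 ef1.
(* in T2, f would lie strictly between g and e *)
have [_ [x2 [re2 _ bge2 no_write_between]]] :=
  lw2 e g (let: And3 _ eT2 _ := fe2 in eT2) lw_g.
rewrite (is_read_inj re2 re) in no_write_between.
apply: (no_write_between f wf); split.
- exact: before_imm_pred bge2 fe2 neq_gf.
- exact: imm_before_before fe2.
Qed.
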